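(* For the undirected greedy routing network creation game: (i) on any finite point set in $\mathbb R^D$ ($D\ge1$) with the Euclidean metric, every pure Nash equilibrium $\mathbf s$ satisfies $c(\mathbf s)\le\left(2-\frac{1}{K(D)}\right)c(\mathbf s^* )$; (ii) on any finite point set of $n\ge2$ points in an arbitrary metric space, every pure Nash equilibrium $\mathbf s$ satisfies $c(\mathbf s)<2\,c(\mathbf s^* )$. Here $\mathbf s^*$ denotes a social optimum.
   Context: Undirected variant of the game: $\mathcal P$ is a finite set of points (agents) with metric $d$; each agent $u$ chooses a strategy $S_u\subseteq\{\{u,v\}:v\in\mathcal P\setminus\{u\}\}$ of undirected edges, which it owns; a profile $\mathbf s$ induces the network $G(\mathbf s)$ on $\mathcal P$ in which $\{u,v\}$ is an edge iff $\{u,v\}\in S_u\cup S_v$. A greedy routing path from $u$ to $w$ is a path $(x_1=u,\dots,x_j=w)$ in $G(\mathbf s)$ with $d(x_i,w)>d(x_{i+1},w)$ for all $i$; $u$ is greedy connected if it has a greedy routing path to every other agent. The cost of $u$ is $c_u(\mathbf s)=|S_u|$ if $u$ is greedy connected and $\infty$ otherwise; social cost $c(\mathbf s)=\sum_u c_u(\mathbf s)$. A pure Nash equilibrium is a profile where no agent can strictly decrease its cost by a unilateral deviation; a social optimum minimizes social cost. $K(D)$ is the kissing number of $\mathbb R^D$: the maximum number of pairwise disjoint (interior-disjoint) unit balls in $\mathbb R^D$ that can simultaneously touch a fixed unit ball; equivalently, the maximum number of points on the unit sphere of $\mathbb R^D$ with pairwise angular distance at least $60^\circ$. *)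

From HB Require Import structures.
From mathcomp Require Import all_boot all_order all_algebra.
From Stdlib Require Import ClassicalEpsilon.
Set Implicit Arguments. Unset Strict Implicit. Unset Printing Implicit Defensive.
Import Order.TTheory GRing.Theory Num.Theory.
Local Open Scope ring_scope.

Section Game.
Variables (R : rcfType) (T : finType) (d : T -> T -> R).

(* A strategy of agent u is represented by the set of partners v such that
   u owns the undirected edge {u,v}; a profile assigns a strategy to each agent. *)
Definition profile := T -> {set T}.

Definition valid_strategy (u : T) (S : {set T}) : bool := u \notin S.
Definition valid_profile (s : profile) : Prop := forall u, valid_strategy u (s u).

Definition deviate (s : profile) (u : T) (S : {set T}) : profile :=
  fun x => if x == u then S else s x.

Definition adj (s : profile) (u v : T) : bool := (v \in s u) || (u \in s v).

(* greedy routing path (x_1 = u, x_2, ..., x_j = w): consecutive vertices adjacent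
   and strictly decreasing distance to w; p = [x_2; ...; x_j] *)
Definition greedy_path (s : profile) (u w : T) (p : seq T) : bool :=
  path (fun x y => adj s x y && (d y w < d x w)) u p && (last u p == w).

Definition greedy_connected (s : profile) (u : T) : Prop :=
  forall w, w != u -> exists p, greedy_path s u w p.

(* costs in nat extended with infinity: None = infinity *)
Definition ext_lt (a b : option nat) : Prop :=
  match a, b with
  | Some x, Some y => (x < y)%N
  | Some _, None => True
  | None, _ => False
  end.

Definition agent_cost (s : profile) (u : T) : option nat :=
  if excluded_middle_informative (greedy_connected s u) then Some #|s u| else None.

Definition ext_add (a b : option nat) : option nat :=
  match a, b with Some x, Some y => Some (x + y)%N | _, _ => None end.

Definition social_cost (s : profile) : option nat :=
  \big[ext_add/Some 0%N]_(u : T) agent_cost s u.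

Definition nash_equilibrium (s : profile) : Prop :=
  valid_profile s /\
  forall u S, valid_strategy u S -> ~ ext_lt (agent_cost (deviate s u S) u) (agent_cost s u).

Definition social_optimum (s : profile) : Prop :=
  valid_profile s /\
  forall s', valid_profile s' -> ~ ext_lt (social_cost s') (social_cost s).

End Game.

Definition is_metric (R : rcfType) (T : finType) (d : T -> T -> R) : Prop :=
  (forall x y, 0 <= d x y) /\ (forall x y, d x y = 0 <-> x = y) /\
  (forall x y, d x y = d y x) /\ (forall x y z, d x z <= d x y + d y z).

Definition dotv (R : rcfType) (D : nat) (x y : 'rV[R]_D) : R :=
  \sum_(i < D) x 0 i * y 0 i.

Definition eucl_dist (R : rcfType) (D : nat) (x y : 'rV[R]_D) : R :=
  Num.sqrt (dotv (x - y) (x - y)).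

(* k points on the unit sphere of R^D with pairwise angular distance at least
   60 degrees, i.e. pairwise inner product at most cos 60 = 1/2 *)
Definition kissing_config (R : rcfType) (D k : nat) (x : 'I_k -> 'rV[R]_D) : Prop :=
  (forall i, dotv (x i) (x i) = 1) /\
  (forall i j, i != j -> dotv (x i) (x j) <= 2^-1).

Definition is_kissing_number (R : rcfType) (D K : nat) : Prop :=
  (exists x : 'I_K -> 'rV[R]_D, kissing_config x) /\
  (forall k (x : 'I_k -> 'rV[R]_D), kissing_config x -> (k <= K)%N).

From HB Require Import structures.
From mathcomp Require Import all_boot all_order all_algebra.
From mathcomp Require Import ring lra zify.
From Stdlib Require Import ClassicalEpsilon.
Import Order.TTheory GRing.Theory Num.Theory.
Set Implicit Arguments. Unset Strict Implicit. Unset Printing Implicit Defensive.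
Local Open Scope ring_scope.

(* In an equilibrium every agent is greedy connected (buying edges to everybody
   would make its cost finite), and an agent u may deviate to any set S which,
   together with the agents already buying an edge to u, covers u: every other
   agent w has a member strictly closer to w than u. So |S_u| is at most the
   part of any cover F_u not bought by others. Every pair {w, nn w}, nn w a
   nearest neighbour of w, must be an edge, bought by one of its ends; counting
   these m >= n/2 edges gives c(s) + m <= sum_u |F_u| for covers with nn u in
   F_u. Neighbourhoods in an optimum are such covers, whence c(s) + m <= 2
   c_opt and (ii). In R^D, greedily adding the uncovered point nearest to u
   gives a cover whose points are pairwise at angle at least 60 degrees seen
   from u, hence of size at most K; then c(s) + m <= nK <= 2mK, and eliminating
   m yields c(s) <= (2 - 1/K) c_opt. *)

Lemma card_pairs (T : finType) (P : T -> T -> bool) :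
  (\sum_u #|[set v | P u v]|)%N = #|[set p : T * T | P p.1 p.2]|.
Proof.
under eq_bigr do rewrite -sum1dep_card.
by rewrite -sum1dep_card pair_big_dep.
Qed.

Section GreedyRouting.
Variables (R : rcfType) (T : finType) (d : T -> T -> R).
Hypothesis d_self_lt : forall u w : T, u != w -> d w w < d u w.

Definition covers (u : T) (A : {set T}) : Prop :=
  forall w, w != u -> exists2 x, x \in A & d x w < d u w.

Definition neighbours (s : profile T) u := [set v | adj s u v].
Definition buyers (s : profile T) u := [set v | u \in s v].
Definition star (u : T) := [set v | v != u].
Definition profile_size (s : profile T) := (\sum_u #|s u|)%N.

Lemma greedy_connected_covers s u :
  greedy_connected d s u -> covers u (neighbours s u).
Proof.
move=> gc w wu; have [[|x p] /andP[/= pp lp]] := gc w wu.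
  by move: lp wu => /eqP ->; rewrite eqxx.
by case/andP: pp => /andP[ux dx] _; exists x; rewrite ?inE.
Qed.

(* Distances to [w] along the path stay below [d u w], so [u] never occurs on it
   and its deviation is irrelevant. *)
Lemma path_deviate s u S w x p :
  d x w < d u w ->
  path (fun a b => adj s a b && (d b w < d a w)) x p ->
  path (fun a b => adj (deviate s u S) a b && (d b w < d a w)) x p.
Proof.
elim: p x => [//|y p IH] x /= dx /andP[/andP[axy dy] pp].
have dyu := lt_trans dy dx.
have [xu yu] : (x == u) = false /\ (y == u) = false.
  by split; apply/negbTE/eqP => E; [move: dx | move: dyu]; rewrite E ltxx.
by rewrite /adj /deviate xu yu -/(adj s x y) axy dy IH.
Qed.

Lemma deviate_greedy_connected s u S :
  (forall v, v != u -> greedy_connected d s v) ->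
  covers u (buyers s u :|: S) -> greedy_connected d (deviate s u S) u.
Proof.
move=> gcs cov w wu; have [x xin dx] := cov w wu.
have xu : (x == u) = false by apply/negbTE/eqP => E; rewrite E ltxx in dx.
have ux : adj (deviate s u S) u x.
  by rewrite /adj /deviate eqxx xu orbC; move: xin; rewrite !inE.
have [xw | xw] := eqVneq x w.
  by subst x; exists [:: w]; rewrite /greedy_path /= ux dx eqxx.
have wx : w != x by rewrite eq_sym.
have [p /andP[pp lp]] := gcs x (negbT xu) w wx.
by exists (x :: p); rewrite /greedy_path /= ux dx lp path_deviate.
Qed.

Lemma greedy_connected_star s u : s u = star u -> greedy_connected d s u.
Proof.
move=> su w wu; exists [:: w].
by rewrite /greedy_path /= /adj su inE wu eqxx d_self_lt 1?eq_sym.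
Qed.

Lemma agent_costE s u : greedy_connected d s u -> agent_cost d s u = Some #|s u|.
Proof. by rewrite /agent_cost; case: excluded_middle_informative. Qed.

Lemma agent_cost_connected s u k :
  agent_cost d s u = Some k -> greedy_connected d s u.
Proof. by rewrite /agent_cost; case: excluded_middle_informative. Qed.

Lemma social_costE s :
  (forall u, greedy_connected d s u) -> social_cost d s = Some (profile_size s).
Proof.
move=> gc; apply: (big_rec2 (fun a b => a = Some b)) => // u _ c _ ->.
by rewrite agent_costE.
Qed.

Lemma social_cost_connected s c u :
  social_cost d s = Some c -> greedy_connected d s u.
Proof.
rewrite /social_cost; have : u \in index_enum T := mem_index_enum u.
elim: (index_enum T) c => [//|v r IH] c; rewrite inE big_cons => /orP uvr.
case Ev : (agent_cost d s v) => [k|] //; case Er : (\big[_/_]_(i <- r) _) => [c'|] //= _.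
by case: uvr => [/eqP -> | ur]; [exact: agent_cost_connected Ev | exact: IH ur Er].
Qed.

Lemma nash_greedy_connected s : nash_equilibrium d s -> forall u, greedy_connected d s u.
Proof.
move=> + u; case=> _ /(_ u (star u)); rewrite /valid_strategy inE eqxx => /(_ isT).
have gcu : greedy_connected d (deviate s u (star u)) u.
  by apply: greedy_connected_star; rewrite /deviate eqxx.
rewrite (agent_costE gcu); case Eu : (agent_cost d s u) => [k|] /= ne_u.
  exact: agent_cost_connected Eu.
by case: ne_u.
Qed.

Lemma nash_card_le_cover s u S :
  nash_equilibrium d s -> covers u (buyers s u :|: S) -> (#|s u| <= #|S|)%N.
Proof.
move=> nes cov; have [_ ne] := nes.
have vS : valid_strategy u (S :\ u) by rewrite /valid_strategy !inE eqxx.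
have cov' : covers u (buyers s u :|: (S :\ u)).
  move=> w wu; have [x xin dx] := cov w wu; exists x => //.
  have xu : x != u by apply: contraTneq dx => ->; rewrite ltxx.
  by move: xin; rewrite !inE xu.
have gc := deviate_greedy_connected (fun v _ => nash_greedy_connected (u := v) nes) cov'.
move: (ne u _ vS); rewrite (agent_costE gc) (agent_costE (nash_greedy_connected (u := u) nes)).
rewrite /= {1}/deviate eqxx => /negP; rewrite -leqNgt => /leq_trans; apply.
exact/subset_leq_card/subsetDl.
Qed.

Lemma valid_star : valid_profile star.
Proof. by move=> u; rewrite /valid_strategy inE eqxx. Qed.

Lemma optimum_greedy_connected s : social_optimum d s -> forall u, greedy_connected d s u.
Proof.
move=> + u; case=> _ /(_ _ valid_star); rewrite social_costE; last first.
  by move=> v; apply: greedy_connected_star.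
case Es : (social_cost d s) => [c|] /= ne_s; last by case: ne_s.
exact: social_cost_connected Es.
Qed.

Lemma social_costs_nash_optimum s sopt :
  nash_equilibrium d s -> social_optimum d sopt ->
  social_cost d s = Some (profile_size s) /\ social_cost d sopt = Some (profile_size sopt).
Proof.
move=> nes opt; rewrite !social_costE //.
- exact: optimum_greedy_connected opt.
- exact: nash_greedy_connected nes.
Qed.

Lemma profile_size_small s : valid_profile s -> (#|T| <= 1)%N -> profile_size s = 0%N.
Proof.
move=> vs hT; apply: big1 => u _; apply/eqP; rewrite cards_eq0; apply/eqP/setP => v.
rewrite inE; apply: contraNF (vs u).
by have /card_le1_eqP/(_ u v isT isT) -> := hT.
Qed.

Lemma sum_card_neighbours s : (\sum_u #|neighbours s u| <= 2 * profile_size s)%N.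
Proof.
have sum_buyers : (\sum_u #|buyers s u| = profile_size s)%N.
  rewrite /profile_size; under eq_bigr do rewrite -sum1_card big_mkcond /=.
  under [RHS]eq_bigr do rewrite -sum1_card big_mkcond /=.
  by rewrite exchange_big; apply: eq_bigr => v _; apply: eq_bigr => u _; rewrite inE.
rewrite mul2n -addnn -{2}sum_buyers -big_split leq_sum // => u _.
apply: leq_trans (leq_card_setU _ _).
by apply/subset_leq_card/subsetP => v; rewrite !inE.
Qed.

Variable nn : T -> T.
Hypothesis nn_neq : forall w, nn w != w.
Hypothesis nn_min : forall w x, x != w -> d (nn w) w <= d x w.

Lemma covers_nn_mem w A : covers (nn w) A -> w \in A.
Proof.
move=> /(_ w); rewrite eq_sym nn_neq => /(_ isT) [x xA].
by apply: contraTT => wA; rewrite -leNgt nn_min //; apply: contraNneq wA => <-.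
Qed.

Lemma greedy_connected_nn_adj s w : greedy_connected d s (nn w) -> adj s (nn w) w.
Proof. by move/greedy_connected_covers/covers_nn_mem; rewrite inE. Qed.

Definition nn_edges := [set [set w; nn w] | w : T].

Lemma card_le_nn_edges : (#|T| <= 2 * #|nn_edges|)%N.
Proof.
rewrite -[#|T|]sum1_card (partition_big (fun w => [set w; nn w]) (mem nn_edges)) /=; last first.
  by move=> w _; apply: imset_f.
rewrite mulnC -sum_nat_const leq_sum // => e /imsetP[w _ ->].
rewrite sum1dep_card (@leq_trans #|[set w; nn w]|) //; last by rewrite cards2 ltnS leq_b1.
by apply/subset_leq_card/subsetP => x; rewrite inE => /eqP <-; rewrite !inE eqxx.
Qed.

Lemma nn_edges_le_buyers s (F : T -> {set T}) :
  (forall w, nn w \in F w) -> (forall w, w \in F (nn w)) ->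
  (forall w, adj s (nn w) w) ->
  (#|nn_edges| <= \sum_u #|F u :&: buyers s u|)%N.
Proof.
move=> nnF wF adj_nn.
(* the edge {u, v} bought by [v] is the image of the pair [(u, v)] *)
have -> : (\sum_u #|F u :&: buyers s u| = \sum_u #|[set v | (v \in F u) && (u \in s v)]|)%N.
  by apply: eq_bigr => u _; apply: eq_card => v; rewrite !inE.
rewrite card_pairs; apply: leq_trans (leq_imset_card (fun p : T * T => [set p.1; p.2]) _).
apply/subset_leq_card/subsetP => _ /imsetP[w _ ->]; apply/imsetP.
case/orP: (adj_nn w) => [w_nn | nn_w]; first by exists (w, nn w); rewrite // inE nnF.
by exists (nn w, w); rewrite ?inE ?wF // setUC.
Qed.

Lemma nash_size_add_nn_edges s (F : T -> {set T}) :
  nash_equilibrium d s -> (forall u, covers u (F u)) -> (forall w, nn w \in F w) ->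
  (profile_size s + #|nn_edges| <= \sum_u #|F u|)%N.
Proof.
move=> nes cov nnF.
have own u : (#|s u| + #|F u :&: buyers s u| <= #|F u|)%N.
  rewrite -(cardsID (buyers s u) (F u)) addnC leq_add2l nash_card_le_cover //.
  move=> w wu; have [x xF dx] := cov u w wu; exists x => //.
  by rewrite !inE xF; case: (u \in s x).
apply: leq_trans (leq_add (leqnn _) (nn_edges_le_buyers nnF _ _)) _.
- by move=> w; apply/covers_nn_mem/cov.
- by move=> w; apply/greedy_connected_nn_adj/(nash_greedy_connected nes).
by rewrite /profile_size -big_split leq_sum.
Qed.

Lemma nash_size_add_nn_edges_le_opt s sopt :
  nash_equilibrium d s -> social_optimum d sopt ->
  (profile_size s + #|nn_edges| <= 2 * profile_size sopt)%N.
Proof.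
move=> nes opt; apply: leq_trans (sum_card_neighbours sopt).
have gco := optimum_greedy_connected opt.
apply: nash_size_add_nn_edges => // [u | w]; first exact: greedy_connected_covers.
by rewrite inE /adj orbC; apply: greedy_connected_nn_adj.
Qed.
End GreedyRouting.

Lemma exists_nearest (R : rcfType) (T : finType) (d : T -> T -> R) :
  (1 < #|T|)%N -> exists nn : T -> T,
    (forall w, nn w != w) /\ (forall w x, x != w -> d (nn w) w <= d x w).
Proof.
move=> hT.
have /fin_all_exists[nn nnP] w : exists v, v != w /\ forall x, x != w -> d v w <= d x w.
  have /card_gt0P[v0] : (0 < #|[set~ w]|)%N by rewrite cardsC1; case: #|T| hT.
  rewrite !inE => v0w.
  by case: (@arg_minP _ R T v0 (fun v => v != w) (fun v => d v w) v0w) => v; exists v.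
by exists nn; split=> w; case: (nnP w).
Qed.

Section DotProduct.
Variables (R : rcfType) (D : nat).
Implicit Types a b c : 'rV[R]_D.

Lemma dotvC a b : dotv a b = dotv b a.
Proof. by apply: eq_bigr => i _; rewrite mulrC. Qed.

Lemma dotv_ge0 a : 0 <= dotv a a.
Proof. by apply: sumr_ge0 => i _; rewrite -expr2 sqr_ge0. Qed.

Lemma dotv_eq0 a : (dotv a a == 0) = (a == 0).
Proof.
apply/idP/eqP => [/eqP a0 | ->]; last by rewrite /dotv big1 // => i _; rewrite mxE mul0r.
have sq_ge0 j : true -> 0 <= a 0 j * a 0 j by rewrite -expr2 sqr_ge0.
apply/rowP => i; have /eqP := psumr_eq0P sq_ge0 a0 (i := i) isT.
by rewrite mulf_eq0 orbb mxE => /eqP.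
Qed.

Lemma dotv_gt0 a : (0 < dotv a a) = (a != 0).
Proof. by rewrite lt_def dotv_eq0 dotv_ge0 andbT. Qed.

Lemma dotvZ k k' a b : dotv (k *: a) (k' *: b) = k * k' * dotv a b.
Proof. by rewrite /dotv mulr_sumr; apply: eq_bigr => i _; rewrite !mxE; ring. Qed.

Lemma dotvBB a b : dotv (a - b) (a - b) = dotv a a - 2 * dotv a b + dotv b b.
Proof.
rewrite /dotv mulr_sumr -sumrB -big_split /=.
by apply: eq_bigr => i _; rewrite !mxE; ring.
Qed.

Lemma dotvNN a b : dotv (- a) (- b) = dotv a b.
Proof. by apply: eq_bigr => i _; rewrite !mxE mulrNN. Qed.

Lemma eucl_distC a b : eucl_dist a b = eucl_dist b a.
Proof. by rewrite /eucl_dist -opprB dotvNN. Qed.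

Lemma eucl_dist_xx a : eucl_dist a a = 0.
Proof.
rewrite /eucl_dist subrr.
have /eqP -> : dotv (0 : 'rV[R]_D) 0 == 0 by rewrite dotv_eq0.
exact: sqrtr0.
Qed.

Lemma eucl_dist_gt0 a b : (0 < eucl_dist a b) = (a != b).
Proof. by rewrite sqrtr_gt0 dotv_gt0 subr_eq0. Qed.

Lemma eucl_dist_le_dotv a b c :
  eucl_dist c a <= eucl_dist a b -> 2 * dotv (a - c) (b - c) <= dotv (b - c) (b - c).
Proof.
rewrite /eucl_dist -[c - a]opprB dotvNN ler_sqrt ?dotv_ge0 //.
have -> : a - b = (a - c) - (b - c) by rewrite opprB addrA subrK.
by rewrite dotvBB; lra.
Qed.

Definition normalize a := (Num.sqrt (dotv a a))^-1 *: a.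

Lemma dotv_normalize a : a != 0 -> dotv (normalize a) (normalize a) = 1.
Proof.
rewrite -dotv_gt0 => a0; rewrite dotvZ -expr2 exprVn sqr_sqrtr ?ltW //.
by rewrite mulVf // gt_eqF.
Qed.

Lemma dotv_normalize_le_half a b : a != 0 -> b != 0 ->
  2 * dotv a b <= dotv a a -> 2 * dotv a b <= dotv b b ->
  dotv (normalize a) (normalize b) <= 2^-1.
Proof.
rewrite -!dotv_gt0 => a0 b0 ha hb; rewrite dotvZ -invfM.
set A := Num.sqrt (dotv a a) in ha *; set B := Num.sqrt (dotv b b) in hb *.
have [A0 B0] : 0 < A /\ 0 < B by rewrite !sqrtr_gt0.
have EA : dotv a a = A * A by rewrite -expr2 sqr_sqrtr ?ltW.
have EB : dotv b b = B * B by rewrite -expr2 sqr_sqrtr ?ltW.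
have min_le_AB : 2 * dotv a b <= A * B.
  have [AB|BA] := lerP A B.
  - by apply: le_trans ha _; rewrite EA; nra.
  - by apply: le_trans hb _; rewrite EB; nra.
by rewrite mulrC ler_pdivrMr ?mulr_gt0 //; lra.
Qed.
End DotProduct.

Section Euclidean.
Variables (R : rcfType) (D K : nat) (T : finType) (pt : T -> 'rV[R]_D).
Hypothesis pt_inj : injective pt.
Hypothesis kissing_K : is_kissing_number R D K.
Let d u v := eucl_dist (pt u) (pt v).

Lemma eucl_self_lt u w : u != w -> d w w < d u w.
Proof.
by rewrite /d eucl_dist_xx eucl_dist_gt0 (inj_eq pt_inj).
Qed.

Variable nn : T -> T.
Hypothesis nn_neq : forall w, nn w != w.
Hypothesis nn_min : forall w x, x != w -> d (nn w) w <= d x w.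

Section Cover.
Variable u : T.

Definition uncovered (A : {set T}) :=
  [set w | (w != u) && [forall x in A, d u w <= d x w]].

(* Seen from [u], any two points of a separated set subtend an angle of at
   least 60 degrees: [xy] is a longest side of the triangle [uxy]. *)
Definition separated (A : {set T}) :=
  forall x y, x \in A -> y \in A -> x != y -> d u x <= d x y.

(* The invariant of the greedy construction, which repeatedly adds the
   uncovered point nearest to [u]; its last clause keeps the added point
   separated from the previous ones. *)
Definition partial_cover (A : {set T}) := [/\ u \notin A, separated A, nn u \in A &
  forall w x, w \in uncovered A -> x \in A -> d u x <= d u w].

Lemma uncoveredS (A B : {set T}) : A \subset B -> uncovered B \subset uncovered A.
Proof.
move=> /subsetP AB; apply/subsetP => w; rewrite !inE => /andP[-> /forall_inP wB].
by apply/forall_inP => x /AB; apply: wB.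
Qed.

Lemma partial_cover_nn : partial_cover [set nn u].
Proof.
split.
- by rewrite inE eq_sym nn_neq.
- by move=> x y /set1P-> /set1P->; rewrite eqxx.
- exact: set11.
- move=> w x; rewrite !inE => /andP[wu _] /eqP->.
  by rewrite /d eucl_distC (eucl_distC (pt u)); apply: nn_min.
Qed.

Lemma partial_cover_extend (A : {set T}) : partial_cover A -> uncovered A != set0 ->
  exists2 A', partial_cover A' & (#|uncovered A'| < #|uncovered A|)%N.
Proof.
case=> uA sepA nnA farA /set0Pn[w1 w1A].
case: (@arg_minP _ R T w1 (fun w => w \in uncovered A) (fun w => d u w) w1A) => w0 w0A w0min.
have := w0A; rewrite inE => /andP[w0u /forall_inP w0far].
have uncovered_w0 : uncovered (w0 |: A) \subset uncovered A by apply/uncoveredS/subsetUr.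
exists (w0 |: A); first split.
- by rewrite !inE negb_or eq_sym w0u.
- move=> x y /setU1P[->|xA] /setU1P[->|yA] xy; first by rewrite eqxx in xy.
  + by rewrite /d (eucl_distC (pt w0)); apply: w0far.
  + exact: le_trans (farA _ _ w0A xA) (w0far _ xA).
  + exact: sepA.
- by rewrite !inE nnA orbT.
- move=> w x /(subsetP uncovered_w0) wA /setU1P[->|xA]; [exact: w0min | exact: farA].
rewrite proper_card // properEneq uncovered_w0 andbT; apply/eqP => /setP/(_ w0).
rewrite w0A !inE w0u /= => /forall_inP/(_ w0 (setU11 _ _)).
by rewrite leNgt eucl_self_lt // eq_sym.
Qed.

Lemma exists_complete_partial_cover : exists2 A, partial_cover A & uncovered A = set0.
Proof.
suff cover_from n A : (#|uncovered A| <= n)%N -> partial_cover A ->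
    exists2 A', partial_cover A' & uncovered A' = set0.
  exact: cover_from (leqnn _) partial_cover_nn.
elim: n A => [|n IH] A An pA.
  by exists A => //; apply/eqP; rewrite -cards_eq0 -leqn0.
have [A0 | ne] := eqVneq (uncovered A) set0; first by exists A.
have [A' pA' lt] := partial_cover_extend pA ne.
by apply: IH pA'; rewrite -ltnS (leq_trans lt An).
Qed.
Lemma separated_card (A : {set T}) : u \notin A -> separated A -> (#|A| <= K)%N.
Proof.
move=> uA sepA.
pose a i := pt (@enum_val T (mem A) i) - pt u.
have a_neq0 i : a i != 0.
  rewrite subr_eq0 (inj_eq pt_inj); apply: contraNneq uA => <-; exact: enum_valP.
apply: (kissing_K.2 _ (fun i => normalize (a i))); split=> [i | i j ij].
  exact: dotv_normalize.
have vij : @enum_val T (mem A) i != enum_val j by rewrite (inj_eq enum_val_inj).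
apply: dotv_normalize_le_half => //.
  by rewrite dotvC; apply/eucl_dist_le_dotv/sepA; rewrite ?enum_valP // eq_sym.
by apply/eucl_dist_le_dotv/sepA; rewrite ?enum_valP.
Qed.

Lemma euclidean_cover : exists G, [/\ covers d u G, nn u \in G & (#|G| <= K)%N].
Proof.
have [A [uA sepA nnA _] A0] := exists_complete_partial_cover.
exists A; split; rewrite ?separated_card // => w wu.
have : w \notin uncovered A by rewrite A0 inE.
rewrite inE wu negb_forall => /existsP[x]; rewrite negb_imply -ltNge => /andP[xA].
by exists x.
Qed.
End Cover.

Lemma euclidean_covers : exists G : T -> {set T},
  [/\ forall u, covers d u (G u), forall u, nn u \in G u & forall u, (#|G u| <= K)%N].
Proof.
have /fin_all_exists[G GP] := euclidean_cover.
by exists G; split=> u; case: (GP u).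
Qed.
End Euclidean.

Lemma metric_self_lt (R : rcfType) (T : finType) (d : T -> T -> R) :
  is_metric d -> forall u w, u != w -> d w w < d u w.
Proof.
case=> d_ge0 [d_eq0 _] u w uw; have /d_eq0 -> : w = w by [].
by rewrite lt_def d_ge0 andbT; apply: contra_neq uw => /d_eq0.
Qed.

Lemma price_of_anarchy_bound (R : realFieldType) (K c copt m : nat) :
  (c + m <= 2 * copt)%N -> (c + m <= 2 * m * K)%N ->
  (c%:R : R) <= (2 - K%:R^-1) * copt%:R.
Proof.
case: K => [|k] h_opt h_K.
  have -> : c = 0%N by lia.
  by rewrite invr0 subr0 mulr_ge0.
have key : (k.+1 * c + copt <= 2 * k.+1 * copt)%N by nia.
have Kpos : (0 : R) < k.+1%:R by rewrite ltr0n.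
rewrite -(ler_pM2l Kpos) mulrA mulrBr mulfV ?gt_eqF //.
by move: key; rewrite -(ler_nat R) natrD !natrM; lra.
Qed.

Theorem mainTheorem14 (R : rcfType) :
  (forall (D K : nat) (T : finType) (pt : T -> 'rV[R]_D),
     (1 <= D)%N -> injective pt -> is_kissing_number R D K ->
     let d := fun u v => eucl_dist (pt u) (pt v) in
     forall s sopt : profile T,
       nash_equilibrium d s -> social_optimum d sopt ->
       exists c copt : nat,
         social_cost d s = Some c /\ social_cost d sopt = Some copt /\
         (c%:R : R) <= (2 - (K%:R)^-1) * copt%:R)
  /\
  (forall (T : finType) (d : T -> T -> R),
     is_metric d -> (2 <= #|T|)%N ->
     forall s sopt : profile T,
       nash_equilibrium d s -> social_optimum d sopt ->
       exists c copt : nat,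
         social_cost d s = Some c /\ social_cost d sopt = Some copt /\
         (c < 2 * copt)%N).
Proof.
split.
- move=> D K T pt _ pt_inj kissing_K d s sopt nes opt.
  have self_lt := eucl_self_lt pt_inj.
  exists (profile_size s), (profile_size sopt).
  have [-> ->] := social_costs_nash_optimum self_lt nes opt; do 2 (split; first by []).
  have [small | big] := leqP #|T| 1.
    by rewrite (profile_size_small nes.1) ?(profile_size_small opt.1) ?mulr0.
  have [nn [nn_neq nn_min]] := exists_nearest d big.
  have [G [Gcov Gnn GK]] := euclidean_covers pt_inj kissing_K nn_neq nn_min.
  apply: price_of_anarchy_bound (nash_size_add_nn_edges_le_opt self_lt nn_neq nn_min nes opt) _.
  apply: leq_trans (nash_size_add_nn_edges self_lt nn_neq nn_min nes Gcov Gnn) _.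
  apply: (@leq_trans (#|T| * K)); first by rewrite -sum_nat_const leq_sum.
  by rewrite leq_mul2r card_le_nn_edges orbT.
- move=> T d d_metric hT s sopt nes opt.
  have self_lt := metric_self_lt d_metric.
  exists (profile_size s), (profile_size sopt).
  have [-> ->] := social_costs_nash_optimum self_lt nes opt; do 2 (split; first by []).
  have [nn [nn_neq nn_min]] := exists_nearest d hT.
  have := nash_size_add_nn_edges_le_opt self_lt nn_neq nn_min nes opt.
  have := card_le_nn_edges nn; lia.
Qed.
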